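(* For $n\ge 2$, $\frac{9}{5}(n-1)\le g(K_3,K_n)\le 2(n-1)$.
   Context: $K_m$ is the complete graph on $m$ vertices. A complete bipartite subgraph of a graph $G$ has two disjoint nonempty vertex classes $X,Y$ and edge set all $xy$ with $x\in X,y\in Y$. For graphs $G,H$, a block is a set $E(B_1)\times E(B_2)$ where $B_1$ is a complete bipartite subgraph of $G$ and $B_2$ a complete bipartite subgraph of $H$; $g(G,H)$ is the minimum number of blocks partitioning $E(G)\times E(H)$. *)

From mathcomp Require Import all_boot all_order.
Set Implicit Arguments. Unset Strict Implicit. Unset Printing Implicit Defensive.

(* A simple graph on a finite vertex type T is given by its edge set
   E : {set {set T}}, each edge being a 2-element subset of T. *)

Definition Kedges (m : nat) : {set {set 'I_m}} :=
  [set e : {set 'I_m} | #|e| == 2].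

Definition cbip_edges (T : finType) (X Y : {set T}) : {set {set T}} :=
  [set [set x; y] | x in X, y in Y].

Definition is_cbip (T : finType) (E F : {set {set T}}) : bool :=
  [exists X : {set T}, exists Y : {set T},
    [&& X != set0, Y != set0, [disjoint X & Y],
        [forall x in X, forall y in Y, [set x; y] \in E] &
        F == cbip_edges X Y]].

Definition is_block (T1 T2 : finType) (E1 : {set {set T1}}) (E2 : {set {set T2}})
    (S : {set {set T1} * {set T2}}) : bool :=
  [exists F1 : {set {set T1}}, exists F2 : {set {set T2}},
    [&& is_cbip E1 F1, is_cbip E2 F2 & S == setX F1 F2]].

Definition block_partition (T1 T2 : finType) (E1 : {set {set T1}}) (E2 : {set {set T2}})
    (P : {set {set {set T1} * {set T2}}}) : bool :=
  partition P (setX E1 E2) && [forall S in P, is_block E1 E2 S].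

(* The default
   value #|E(G) x E(H)| is attained by the partition into singletons
   (single edges are K_{1,1}), so this is the true minimum. *)
Definition gGH (T1 T2 : finType) (E1 : {set {set T1}}) (E2 : {set {set T2}}) : nat :=
  \big[minn/#|setX E1 E2|]_(P : {set {set {set T1} * {set T2}}} | block_partition E1 E2 P) #|P|.

From mathcomp Require Import all_boot all_order all_algebra.
From mathcomp Require Import zify.
Set Implicit Arguments. Unset Strict Implicit. Unset Printing Implicit Defensive.
Import Order.TTheory GRing.Theory Num.Theory.

(* Lower bound (after Graham and Pollak).  Let c weight the edges of K_3 with
   nonzero total weight.  In a partition of E(K_3) x E(K_n) into blocks
   F x E(X,Y), at least n - 1 blocks have c(F) <> 0: otherwise some nonzero
   x in Q^n sums to 0 over V(K_n) and over one side X of each such block, and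
   summing c(f) x_a x_b blockwise over E(K_3) x E(K_n) gives
   c(E(K_3)) * sum_{a<b} x_a x_b = 0, whereas
   2 sum_{a<b} x_a x_b = (sum x)^2 - sum x^2 < 0.  Use the weightings
   "indicator of the edge opposite k" (counted twice) and "1 minus twice
   that indicator", k in K_3, each of total weight 1: a complete bipartite
   subgraph of K_3 (an edge or a path of length 2) has nonzero weight for
   exactly 5 of these 9, so 9(n - 1) <= 5 |P|.  Products of partitions of the two graphs into complete
   bipartite subgraphs are block partitions, and K_(m+1) is partitioned
   into the m stars {ij : i < j}, j = 1..m. *)

Section CompleteBipartite.
Variables (T : finType) (E : {set {set T}}).

Lemma is_cbipP F :
  reflect (exists X, exists2 Y, [/\ X != set0, Y != set0, [disjoint X & Y]
             & cbip_edges X Y \subset E] & F = cbip_edges X Y)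
          (is_cbip E F).
Proof.
apply: (iffP existsP) => [[X /existsP[Y /and5P[X0 Y0 dXY /forall_inP XYE /eqP ->]]]|].
  exists X; exists Y => //; split => //; apply/subsetP => _ /imset2P[x y xX yY ->].
  by move/forall_inP: (XYE x xX); apply.
move=> [X [Y [X0 Y0 dXY XYE] ->]]; exists X; apply/existsP; exists Y.
rewrite X0 Y0 dXY eqxx andbT /=; apply/forall_inP => x xX; apply/forall_inP => y yY.
by rewrite (subsetP XYE) //; apply/imset2P; exists x y.
Qed.

Lemma cbip_sub F : is_cbip E F -> F \subset E.
Proof. by case/is_cbipP => X [Y [_ _ _ XYE] ->]. Qed.

Lemma cbip_neq0 F : is_cbip E F -> F != set0.
Proof.
case/is_cbipP => X [Y [/set0Pn[x xX] /set0Pn[y yY] _ _] ->].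
by apply/set0Pn; exists [set x; y]; apply/imset2P; exists x y.
Qed.

Lemma card_cbip_edges (X Y : {set T}) : #|cbip_edges X Y| <= #|X| * #|Y|.
Proof. by rewrite /cbip_edges curry_imset2X -cardsX leq_imset_card. Qed.

Lemma set2_inj_disjoint (X Y : {set T}) : [disjoint X & Y] ->
  {in setX X Y &, injective (uncurry (fun a b : T => [set a; b]))}.
Proof.
move=> dXY [a b] [c d] /setXP[aX bY] /setXP[cX dY] /= eab.
have notXY u : u \in X -> u \in Y -> False.
  by move=> uX uY; rewrite (disjointFr dXY uX) in uY.
have: a \in [set c; d] by rewrite -eab set21.
have: b \in [set c; d] by rewrite -eab set22.
rewrite !in_set2 => /orP[/eqP eb|/eqP ->] /orP[/eqP ->|/eqP ea] //; subst.
- by case: (notXY c).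
- by case: (notXY c).
- by case: (notXY d).
Qed.

End CompleteBipartite.

Section Sums.
Local Open Scope ring_scope.

Lemma sum_setX (R : nmodType) (T1 T2 : finType) (A : {set T1}) (B : {set T2})
    (F : T1 * T2 -> R) :
  \sum_(p in setX A B) F p = \sum_(a in A) \sum_(b in B) F (a, b).
Proof. by rewrite pair_big_dep; apply: eq_big => -[a b]; rewrite ?in_setX. Qed.

Lemma sum_setX_mul (R : pzSemiRingType) (T1 T2 : finType)
    (A : {set T1}) (B : {set T2}) (f : T1 -> R) (g : T2 -> R) :
  \sum_(p in setX A B) f p.1 * g p.2 = (\sum_(a in A) f a) * \sum_(b in B) g b.
Proof.
rewrite sum_setX mulr_suml; apply: eq_bigr => a _.
by rewrite mulr_sumr.
Qed.

End Sums.

Section EdgeProducts.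
Local Open Scope ring_scope.
Variables (R : comPzRingType) (T : finType) (x : T -> R).

Definition edge_prod (e : {set T}) : R := \prod_(i in e) x i.

Lemma edge_prod2 a b : a != b -> edge_prod [set a; b] = x a * x b.
Proof. by move=> ab; rewrite /edge_prod big_setU1 ?big_set1 ?inE. Qed.

Lemma sum_cbip_edges_prod (X Y : {set T}) : [disjoint X & Y] ->
  \sum_(e in cbip_edges X Y) edge_prod e = (\sum_(i in X) x i) * \sum_(j in Y) x j.
Proof.
move=> dXY; rewrite /cbip_edges curry_imset2X big_imset /=; last exact: set2_inj_disjoint.
rewrite sum_setX mulr_suml; apply: eq_bigr => a aX; rewrite mulr_sumr.
apply: eq_bigr => b bY; rewrite edge_prod2 //.
by apply: contraTneq bY => <-; rewrite (disjointFr dXY aX).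
Qed.

Lemma pairs_containing (i : T) :
  [set e : {set T} | (#|e| == 2)%N & i \in e] = [set [set i; j] | j in [set~ i]].
Proof.
apply/setP => e; rewrite inE; apply/andP/imsetP => [[]|[j]].
  move=> /cards2P[a [b [ab ->]]].
  rewrite in_set2 => /orP[]/eqP ?; subst i.
    by exists b; rewrite // in_setC1 eq_sym.
  by exists a; rewrite ?in_setC1 // setUC.
by rewrite in_setC1 => ij ->; split; rewrite ?set21 // cards2 (eq_sym i) ij.
Qed.

Lemma sum_pairs_containing (i : T) :
  \sum_(e : {set T} | (#|e| == 2)%N && (i \in e)) edge_prod e
    = \sum_(j | j != i) x i * x j.
Proof.
rewrite -big_set /= pairs_containing big_imset /=.
  by apply: eq_big => [j|j]; rewrite ?in_setC1 // => ji; rewrite edge_prod2 // eq_sym.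
move=> j k; rewrite !in_setC1 => ji ki eijk.
by have := set22 i j; rewrite eijk in_set2 (negbTE ji) => /eqP.
Qed.

Lemma sum_pairs_prod :
  2 * \sum_(e in [set e : {set T} | #|e| == 2]) edge_prod e
    = (\sum_i x i) ^+ 2 - \sum_i x i ^+ 2.
Proof.
transitivity (\sum_i \sum_(j | j != i) x i * x j).
  rewrite -(eq_bigr _ (fun i _ => sum_pairs_containing i)) /=.
  rewrite (exchange_big_dep (fun e : {set T} => #|e| == 2)%N) /=;
    last by move=> i e _ /andP[].
  rewrite mulr_sumr; apply: eq_big => [e|e]; first by rewrite inE.
  rewrite inE => /eqP e2.
  by rewrite (eq_bigl (mem e)) ?sumr_const ?e2 ?mulr_natl // => i; rewrite andbC.
apply/eqP; rewrite eq_sym subr_eq addrC -big_split /= expr2 mulr_suml.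
apply/eqP/eq_bigr => i _.
by rewrite mulr_sumr (bigD1 i) //= expr2.
Qed.

End EdgeProducts.

Section Kernel.
Local Open Scope ring_scope.

Lemma exists_nonzero_zero_sums (F : fieldType) n (S : {set {set 'I_n}}) :
  (#|S| < n)%N ->
  exists2 v : 'rV[F]_n, v != 0 & forall A, A \in S -> \sum_(i in A) v 0 i = 0.
Proof.
move=> ltSn.
pose M : 'M[F]_(n, #|S|) := \matrix_(i, j) (i \in @enum_val _ (mem S) j)%:R.
have : ~~ row_free M by rewrite /row_free ltn_eqF // (leq_ltn_trans (rank_leq_col M)).
rewrite -kermx_eq0 => /rowV0Pn[v /sub_kermxP vM0 v0]; exists v => // A AS.
move/matrixP/(_ 0 (enum_rank_in AS A)): vM0; rewrite !mxE => vMA.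
rewrite -[RHS]vMA big_mkcond; apply: eq_bigr => i _.
by rewrite mxE enum_rankK_in //; case: (i \in A); rewrite ?mulr1 ?mulr0.
Qed.

End Kernel.

Section Blocks.
Variables (T1 T2 : finType).
Implicit Types (B : {set {set T1} * {set T2}}).

(* The two sides of the K_n-factor of a block, in some order; [(set0, set0)]
   is a junk value for non-blocks. *)
Definition block_sides B : {set T2} * {set T2} :=
  odflt (set0, set0) [pick s : {set T2} * {set T2} |
    [disjoint s.1 & s.2] && (B == setX (fst @: B) (cbip_edges s.1 s.2))].

Lemma block_sidesP (E1 : {set {set T1}}) (E2 : {set {set T2}}) B :
  is_block E1 E2 B ->
  [/\ is_cbip E1 (fst @: B), [disjoint (block_sides B).1 & (block_sides B).2]
    & B = setX (fst @: B) (cbip_edges (block_sides B).1 (block_sides B).2)].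
Proof.
case/existsP => F1 /existsP[F2 /and3P[cbF1 cbF2 /eqP ->]].
have fstF : fst @: setX F1 F2 = F1.
  apply/setP => f; apply/imsetP/idP => [[[f' e] /setXP[f'F1 _] ->] //|fF1].
  by have /set0Pn[e eF2] := cbip_neq0 cbF2; exists (f, e); rewrite ?in_setX ?fF1.
rewrite /block_sides fstF; case: pickP => [s /andP[dS /eqP eB] //|none].
case/is_cbipP: cbF2 => X [Y [_ _ dXY _] eF2].
by have := none (X, Y); rewrite /= dXY eF2 eqxx.
Qed.

Section Weights.
Local Open Scope ring_scope.
Variable R : comPzRingType.

Definition total_weight (c : {set T1} -> R) (F : {set {set T1}}) : R :=
  \sum_(f in F) c f.

Lemma block_partition_sum_prod (E1 : {set {set T1}}) (E2 : {set {set T2}}) P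
    (c : {set T1} -> R) (x : T2 -> R) :
  block_partition E1 E2 P ->
  total_weight c E1 * \sum_(e in E2) edge_prod x e =
  \sum_(B in P) total_weight c (fst @: B) *
    ((\sum_(i in (block_sides B).1) x i) * \sum_(i in (block_sides B).2) x i).
Proof.
case/andP => partP /forall_inP blocksP.
rewrite -sum_setX_mul (set_partition_big _ partP); apply: eq_bigr => B PB.
have [_ dXY {1}->] := block_sidesP (blocksP B PB).
by rewrite sum_setX_mul sum_cbip_edges_prod.
Qed.

End Weights.
End Blocks.

Section WeightedGrahamPollak.
Local Open Scope ring_scope.
Variables (R : realFieldType) (T : finType) (E : {set {set T}}) (n : nat).
Variable P : {set {set {set T} * {set 'I_n}}}.
Hypothesis partP : block_partition E (Kedges n) P.

Definition nonzero_blocks (c : {set T} -> R) :=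
  [set B in P | total_weight c (fst @: B) != 0].

Lemma nonzero_blocks_lower_bound c :
  total_weight c E != 0 -> (n <= #|nonzero_blocks c|.+1)%N.
Proof.
move=> c_nz; rewrite leqNgt; apply/negP => small.
pose S := setT |: [set (block_sides B).1 | B in nonzero_blocks c].
have ltSn : (#|S| < n)%N.
  by apply: leq_ltn_trans small; rewrite cardsU1 -add1n leq_add ?leq_b1 ?leq_imset_card.
have [v v_nz vS] := exists_nonzero_zero_sums R ltSn.
have sum_v : \sum_i v 0 i = 0.
  by have := vS _ (setU11 _ _); under eq_bigl do rewrite in_setT.
have pairs_v : \sum_(e in Kedges n) edge_prod (v 0) e = 0.
  apply: (mulfI c_nz); rewrite mulr0 (block_partition_sum_prod _ _ partP) big1 // => B PB.
  have [QB|] := boolP (B \in nonzero_blocks c).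
    by rewrite vS ?mul0r ?mulr0 //; apply/setU1r/imset_f.
  by rewrite inE PB /= negbK => /eqP ->; rewrite mul0r.
have := sum_pairs_prod (v 0); rewrite pairs_v sum_v mulr0 expr0n sub0r.
move/eqP; rewrite eq_sym oppr_eq0 => /eqP sq0.
case/negP: v_nz; apply/eqP/rowP => i; rewrite mxE; apply/eqP.
by rewrite -sqrf_eq0; apply/eqP; apply: (psumr_eq0P _ sq0) => // j _; exact: sqr_ge0.
Qed.

Lemma card_nonzero_blocks c :
  #|nonzero_blocks c| = (\sum_(B in P) (total_weight c (fst @: B) != 0%R))%N.
Proof.
rewrite -sum1dep_card big_mkcondr /=; apply: eq_bigr => B _.
by case: (_ != 0).
Qed.

Lemma nonzero_blocks_double_counting (I : finType) (mu : I -> nat)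
    (c : I -> {set T} -> R) m :
  (forall i, total_weight (c i) E != 0) ->
  (forall B, B \in P -> \sum_i mu i * (total_weight (c i) (fst @: B) != 0%R) <= m)%N ->
  ((\sum_i mu i) * (n - 1) <= m * #|P|)%N.
Proof.
move=> c_nz Bm.
apply: (@leq_trans (\sum_i mu i * #|nonzero_blocks (c i)|)).
  rewrite big_distrl /= leq_sum // => i _.
  by rewrite leq_mul2l leq_subLR add1n nonzero_blocks_lower_bound ?orbT.
under eq_bigr do rewrite card_nonzero_blocks big_distrr /=.
by rewrite exchange_big mulnC -sum_nat_const leq_sum.
Qed.

End WeightedGrahamPollak.

Lemma setC1_Kedges3 (k : 'I_3) : [set~ k] \in Kedges 3.
Proof. by rewrite inE cardsC1 card_ord. Qed.

Lemma Kedges3E : Kedges 3 = [set [set~ k] | k : 'I_3].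
Proof.
apply/setP => e; apply/idP/imsetP => [|[k _ ->]]; last exact: setC1_Kedges3.
rewrite inE => e2.
have /cards1P[k ek] : #|~: e| == 1.
  by rewrite -(eqn_add2l 2) -{1}(eqP e2) cardsC card_ord.
by exists k; rewrite // -ek setCK.
Qed.

Lemma card_Kedges3_subset (F : {set {set 'I_3}}) :
  F \subset Kedges 3 -> #|F| = \sum_(k < 3) ([set~ k] \in F).
Proof.
rewrite Kedges3E => sFK.
have eF : F = [set [set~ k] | k in [set k | [set~ k] \in F]].
  apply/setP => f; apply/idP/imsetP => [fF|[k]]; last by rewrite inE => kF ->.
  by have /imsetP[k _ fk] := subsetP sFK f fF; exists k; rewrite // inE -fk.
rewrite {1}eF card_imset; last by move=> k l /setC_inj/set1_inj.
rewrite -sum1dep_card big_mkcond; apply: eq_bigr => k _.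
by case: (_ \in F).
Qed.

Lemma card_Kedges3 : #|Kedges 3| = 3.
Proof.
rewrite card_Kedges3_subset // (eq_bigr (fun=> 1%N)) ?sum_nat_const ?card_ord //.
by move=> k _; rewrite setC1_Kedges3.
Qed.

Lemma card_cbip_Kedges3 F : is_cbip (Kedges 3) F -> #|F| <= 2.
Proof.
case/is_cbipP => X [Y [X0 Y0 dXY _] ->]; apply: leq_trans (card_cbip_edges X Y) _.
have : #|X| + #|Y| <= 3.
  by rewrite -cardsUI (disjoint_setI0 dXY) cards0 addn0 (leq_trans (max_card _)) ?card_ord.
by move: X0 Y0; rewrite -!card_gt0; nia.
Qed.

Section TriangleWeights.
Local Open Scope ring_scope.
Variable R : numDomainType.

Definition opposite_weight (k : 'I_3) (f : {set 'I_3}) : R := (f == [set~ k])%:R.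
Definition star_weight (k : 'I_3) (f : {set 'I_3}) : R := 1 - 2 * opposite_weight k f.

Lemma sum_opposite_weight (F : {set {set 'I_3}}) k :
  total_weight (opposite_weight k) F = ([set~ k] \in F)%:R.
Proof.
rewrite /total_weight; have [kF|kNF] := boolP ([set~ k] \in F).
  by rewrite (bigD1 _ kF) /= /opposite_weight eqxx big1 ?addr0 // => f /andP[_ /negbTE ->].
rewrite big1 // => f fF; rewrite /opposite_weight.
by case: eqP fF => // ->; rewrite (negbTE kNF).
Qed.

Lemma sum_star_weight (F : {set {set 'I_3}}) k :
  total_weight (star_weight k) F = #|F|%:R - 2 * ([set~ k] \in F)%:R.
Proof. by rewrite -sum_opposite_weight /total_weight sumrB sumr_const -mulr_sumr. Qed.

Lemma count_nonzero_triangle_weights F : is_cbip (Kedges 3) F ->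
  (2 * \sum_(k < 3) (total_weight (opposite_weight k) F != 0%R)
     + \sum_(k < 3) (total_weight (star_weight k) F != 0%R) = 5)%N.
Proof.
move=> cbF; have := card_cbip_Kedges3 cbF; have := cbip_neq0 cbF.
rewrite -card_gt0 => F_gt0 F_le2.
under eq_bigr do rewrite sum_opposite_weight pnatr_eq0.
under [X in (_ + X)%N]eq_bigr do rewrite sum_star_weight -natrM subr_eq0 eqr_nat.
move: F_gt0 F_le2; rewrite (card_Kedges3_subset (cbip_sub cbF)) !big_ord_recl !big_ord0.
by case: ([set~ ord0] \in F); case: ([set~ lift _ _] \in F); case: ([set~ _] \in F).
Qed.

End TriangleWeights.

Lemma Kedges3_block_partition_lower_bound n P :
  block_partition (Kedges 3) (Kedges n) P -> 9 * (n - 1) <= 5 * #|P|.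
Proof.
move=> partP; have /andP[_ /forall_inP blocksP] := partP.
pose mu (i : 'I_3 + 'I_3) := if i is inl _ then 2 else 1.
pose c (i : 'I_3 + 'I_3) : {set 'I_3} -> rat :=
  match i with inl k => opposite_weight _ k | inr k => star_weight _ k end.
have := nonzero_blocks_double_counting partP (mu := mu) (c := c) (m := 5).
rewrite big_sumType /= !sum_nat_const card_ord; apply.
  case=> k /=; rewrite ?sum_opposite_weight ?sum_star_weight setC1_Kedges3 //.
  by rewrite card_Kedges3 mulr1 -natrB.
move=> B /blocksP /block_sidesP[cbF _ _].
rewrite big_sumType /= -big_distrr /=.
under [X in (_ + X)%N]eq_bigr do rewrite mul1n.
by rewrite count_nonzero_triangle_weights.
Qed.

Definition cbip_partition (T : finType) (E : {set {set T}})
    (Q : {set {set {set T}}}) :=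
  partition Q E && [forall F in Q, is_cbip E F].

Lemma card_partition_le (T : finType) (P : {set {set T}}) D :
  partition P D -> #|P| <= #|D|.
Proof.
move=> partP; rewrite (card_partition partP) -sum1_card leq_sum // => A PA.
by rewrite card_gt0 (partition_neq0 partP PA).
Qed.

Section BipartitePartitions.
Variables (T1 T2 : finType) (E1 : {set {set T1}}) (E2 : {set {set T2}}).

Lemma block_partition_setX Q1 Q2 :
  cbip_partition E1 Q1 -> cbip_partition E2 Q2 ->
  block_partition E1 E2 [set setX F1 F2 | F1 in Q1, F2 in Q2].
Proof.
case/andP => part1 /forall_inP cb1; case/andP => part2 /forall_inP cb2.
apply/andP; split; last first.
  apply/forall_inP => _ /imset2P[F1 F2 F1Q F2Q ->].
  by apply/existsP; exists F1; apply/existsP; exists F2; rewrite cb1 ?cb2 ?eqxx.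
apply/and3P; split.
- apply/eqP/setP => -[f e].
  rewrite in_setX -(cover_partition part1) -(cover_partition part2).
  apply/bigcupP/andP => [[_ /imset2P[F1 F2 F1Q F2Q ->] /setXP[fF1 eF2]]|].
    by split; apply/bigcupP; [exists F1 | exists F2].
  case=> /bigcupP[F1 F1Q fF1] /bigcupP[F2 F2Q eF2].
  by exists (setX F1 F2); [apply/imset2P; exists F1 F2 | rewrite in_setX fF1 eF2].
- apply/trivIsetP => _ _ /imset2P[F1 F2 F1Q F2Q ->] /imset2P[G1 G2 G1Q G2Q ->].
  apply: contraR => /pred0Pn[[f e] /andP[/setXP[fF1 eF2] /setXP[fG1 eG2]]].
  have ti1 := partition_trivIset part1; have ti2 := partition_trivIset part2.
  rewrite -(def_pblock ti1 F1Q fF1) -(def_pblock ti1 G1Q fG1).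
  by rewrite -(def_pblock ti2 F2Q eF2) -(def_pblock ti2 G2Q eG2).
- apply/imset2P => -[F1 F2 F1Q F2Q /esym/setP].
  have /set0Pn[f fF1] := partition_neq0 part1 F1Q.
  have /set0Pn[e eF2] := partition_neq0 part2 F2Q.
  by move/(_ (f, e)); rewrite in_setX fF1 eF2 inE.
Qed.

Lemma gGH_le_card P : block_partition E1 E2 P -> gGH E1 E2 <= #|P|.
Proof.
move=> partP.
have := bigmin_le_cond (T := nat) #|setX E1 E2|
  (fun Q : {set {set {set T1} * {set T2}}} => #|Q|) partP.
by rewrite minEnat.
Qed.

Lemma gGH_attained P0 : block_partition E1 E2 P0 ->
  exists2 P, block_partition E1 E2 P & gGH E1 E2 = #|P|.
Proof.
move=> partP0.
suff [P partP le_P] : exists2 P, block_partition E1 E2 P & #|P| <= gGH E1 E2.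
  by exists P => //; apply/anti_leq; rewrite le_P gGH_le_card.
apply: (big_ind (fun k => exists2 P, block_partition E1 E2 P & #|P| <= k)).
- by exists P0 => //; exact: card_partition_le (proj1 (andP partP0)).
- move=> a b [P partP le_Pa] [Q partQ le_Qb].
  by rewrite /minn; case: ltnP => _; [exists P | exists Q].
- by move=> P partP; exists P.
Qed.

Lemma gGH_le_mul Q1 Q2 : cbip_partition E1 Q1 -> cbip_partition E2 Q2 ->
  gGH E1 E2 <= #|Q1| * #|Q2|.
Proof.
move=> cb1 cb2; apply: leq_trans (gGH_le_card (block_partition_setX cb1 cb2)) _.
by rewrite curry_imset2X -cardsX leq_imset_card.
Qed.

End BipartitePartitions.

Definition star n (j : 'I_n) : {set {set 'I_n}} :=
  cbip_edges [set j] [set i : 'I_n | i < j].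

Definition stars m : {set {set {set 'I_m.+1}}} :=
  [set star j | j in [set j : 'I_m.+1 | 0 < j]].

Lemma star_cbip m (j : 'I_m.+1) : 0 < j -> is_cbip (Kedges m.+1) (star j).
Proof.
move=> j_gt0; apply/is_cbipP; exists [set j]; exists [set i : 'I_m.+1 | i < j] => //.
split.
- by apply/set0Pn; exists j; rewrite set11.
- by apply/set0Pn; exists ord0; rewrite inE.
- by rewrite disjoints1 inE ltnn.
- apply/subsetP => _ /imset2P[_ i /set1P -> ij ->].
  by rewrite inE cards2 (_ : j != i) //; apply: contraTneq ij => ->; rewrite inE ltnn.
Qed.

Lemma mem_star n (j : 'I_n) e :
  e \in star j -> j \in e /\ {in e, forall i : 'I_n, i <= j}.
Proof.
case/imset2P => _ i /set1P -> ij ->; split => [|k]; first exact: set21.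
by rewrite in_set2 => /orP[]/eqP -> //; rewrite inE in ij; exact: ltnW.
Qed.

Lemma card_stars m : #|stars m| <= m.
Proof.
apply: leq_trans (leq_imset_card _ _) _.
rewrite (_ : [set j : 'I_m.+1 | 0 < j] = [set~ ord0]) ?cardsC1 ?card_ord //.
by apply/setP => j; rewrite !inE lt0n.
Qed.

Lemma stars_partition m : cbip_partition (Kedges m.+1) (stars m).
Proof.
apply/andP; split; last first.
  by apply/forall_inP => _ /imsetP[j + ->]; rewrite inE; exact: star_cbip.
apply/and3P; split.
- apply/eqP/setP => e; apply/bigcupP/idP => [[_ /imsetP[j j_gt0 ->]]|].
    by apply/subsetP/cbip_sub/star_cbip; rewrite inE in j_gt0.
  rewrite inE => /cards2P[a [b [ab ->]]].
  wlog lt_ab : a b ab / a < b.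
    move=> hwlog; case: (ltngtP a b) => [|lt_ba|/val_inj eab]; first exact: hwlog.
      by rewrite setUC; apply: hwlog; rewrite // eq_sym.
    by rewrite eab eqxx in ab.
  exists (star b); first by apply/imsetP; exists b; rewrite // inE (leq_ltn_trans _ lt_ab).
  by apply/imset2P; exists b a; rewrite ?set11 ?inE // setUC.
- apply/trivIsetP => _ _ /imsetP[j _ ->] /imsetP[k _ ->]; apply: contraR => /pred0Pn[e].
  case/andP => /mem_star[je le_j] /mem_star[ke le_k].
  by rewrite (_ : j = k) //; apply/val_inj/anti_leq; rewrite le_k ?le_j.
- apply/imsetP => -[j j_gt0 /esym star0]; rewrite inE in j_gt0.
  by have := cbip_neq0 (star_cbip j_gt0); rewrite star0 eqxx.
Qed.

Theorem mainTheorem6 (n : nat) (hn : 2 <= n) :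
  9 * (n - 1) <= 5 * gGH (Kedges 3) (Kedges n) /\
  gGH (Kedges 3) (Kedges n) <= 2 * (n - 1).
Proof.
case: n hn => // m _.
have partK3 := stars_partition 2; have partKn := stars_partition m.
split.
  have [P partP ->] := gGH_attained (block_partition_setX partK3 partKn).
  exact: Kedges3_block_partition_lower_bound.
apply: leq_trans (gGH_le_mul partK3 partKn) _.
by rewrite subn1 leq_mul ?card_stars.
Qed.
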